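(* For the canonical collection $\mathcal{S}$, $$B(\mathcal{S}):=\int_0^\infty\big|\{S\in\mathcal{S}: t\text{ is }S\text{-bad}\}\big|\,dt\ \le\ 2\cdot\mathrm{excess}(\mathrm{OPT}).$$
   Context: Steiner Forest: finite undirected graph $G=(V,E)$ with non-negative edge costs $(c_e)_{e\in E}$ and a set $\mathcal{D}$ of demand pairs $\{a,b\}\subseteq V$ (partners); feasible solutions are $F\subseteq E$ with each demand pair in one connected component of $(V,F)$, of cost $c(F)=\sum_{e\in F}c_e$. $\mathrm{OPT}$ is a fixed optimal solution that is inclusionwise minimal (no cost-$0$ edge can be omitted keeping feasibility). For $U\subseteq V$, $\delta(U)$ is the set of edges with exactly one endpoint in $U$; $U$ separates $S$ if $S\cap U\ne\emptyset$ and $S\setminus U\ne\emptyset$. The $\varepsilon$-extended moat-growing algorithm (fixed $\varepsilon\ge0$): time $t$ increases continuously from $0$ at unit rate; it maintains tight edges $F$ (initially empty), duals $y_S(t)\ge0$ (initially $0$), and budgets of components (initially $0$). $\mathcal{C}^t$ is the family of vertex sets of connected components of $(V,F)$. A component is demand-active if it contains a vertex not connected in $(V,F)$ to some partner; budget-active if not demand-active but with positive budget; active if either; $\mathcal{A}^t$ is the set of active components. Each $y_S$, $S\in\mathcal{A}^t$, grows at unit rate; budgets of demand-active components grow at rate $\varepsilon$ and of budget-active ones decrease at rate $1$; an edge $e$ with $\sum_{S:e\in\delta(S)}y_S(t)=c_e$ becomes tight and is added to $F$; merging components add budgets. $y_S=y_S(\infty)$; $\mathcal{U}_{\mathrm{sep}}$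 is the set of $U\in\mathrm{supp}(y)$ separating some demand pair; $\mathrm{excess}(F)=c(F)-\sum_{U\in\mathcal{U}_{\mathrm{sep}}}y_U$. The deactivation time $\tau_v$ of $v$ is the largest $t$ such that for all $s<t$, $v$ lies in a set of $\mathcal{A}^s$. Vertices $u,v$ are actively connected if for some $t$ they lie in a common set of $\mathcal{C}^t$ and $\tau_u,\tau_v\ge t$ (an equivalence relation). Canonical collection $\mathcal{S}$: start with a family $\mathcal{F}$ in which each tree of $\mathrm{OPT}$ is its own forest; for each $U\in\mathcal{U}_{\mathrm{sep}}$, merge all forests of $\mathcal{F}$ that connect some demand pair separated by $U$ into a single forest. For each $F\in\mathcal{F}$ let $r_F$ be a vertex of $F$ with maximum deactivation time; for each connected component $T$ of $F$, let $S$ be the set of vertices of $T$ actively connected to $r_F$; if $S\ne\emptyset$, add $S$ to $\mathcal{S}$. For $S\in\mathcal{S}$, a time $t\ge0$ is $S$-bad if some set $U\in\mathcal{A}^t$ that separates $S$ also separates some other set $S'\in\mathcal{S}\setminus\{S\}$; otherwise $t$ is $S$-good. *)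

From HB Require Import structures.
From mathcomp Require Import all_boot all_order all_algebra.
From mathcomp Require Import all_classical all_reals all_analysis.
Set Implicit Arguments. Unset Strict Implicit. Unset Printing Implicit Defensive.
Import Order.TTheory GRing.Theory Num.Theory.
Local Open Scope ring_scope.

(* A finite undirected (multi)graph: vertex type V, edge type E, each edge e
   has the two endpoints [src e] and [tgt e] (orientation irrelevant). *)
Section SteinerForest.
Variables (V E : finType) (src tgt : E -> V).

Definition adj (F : {set E}) : rel V := fun u v =>
  [exists e in F, ((src e == u) && (tgt e == v)) || ((src e == v) && (tgt e == u))].
Definition conn (F : {set E}) (u v : V) : bool := connect (adj F) u v.
Definition comp (F : {set E}) (v : V) : {set V} := [set w | conn F v w].
Definition comps (F : {set E}) : {set {set V}} := [set comp F v | v : V].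
Definition in_delta (U : {set V}) (e : E) : bool := (src e \in U) != (tgt e \in U).
Definition separates (U S : {set V}) : bool := (S :&: U != finset.set0) && (S :\: U != finset.set0).

(* demand pairs {a,b}, given as (a,b) \in D *)
Variable D : {set V * V}.
Definition partners (u w : V) : bool := ((u, w) \in D) || ((w, u) \in D).
Definition feasible (F : {set E}) : bool := [forall p in D, conn F p.1 p.2].
Definition demand_active (F : {set E}) (S : {set V}) : bool :=
  [exists u in S, exists w, partners u w && ~~ conn F u w].

Variables (R : realType) (c : E -> R).
Definition cost (F : {set E}) : R := \sum_(e in F) c e.

(* A run of the eps-extended moat-growing algorithm is described by the tight
   edge set [Fr t] at each time t and the budget [bud t S] of each component
   S of (V, Fr t) at time t; all other quantities are derived below. *)
Variables (eps : R) (Fr : R -> {set E}) (bud : R -> {set V} -> \bar R).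

Definition dact (t : R) (S : {set V}) : bool :=
  (S \in comps (Fr t)) && demand_active (Fr t) S.
Definition bact (t : R) (S : {set V}) : bool :=
  [&& S \in comps (Fr t), ~~ demand_active (Fr t) S & (0 < bud t S)%E].
Definition active (t : R) : {set {set V}} := [set S | dact t S || bact t S].
Definition ydual (t : R) (S : {set V}) : \bar R :=
  lebesgue_measure [set s : R | (0 <= s < t)%R /\ S \in active s]%classic.
Definition load (t : R) (e : E) : \bar R :=
  (\sum_(S : {set V} | in_delta S e) ydual t S)%E.

Definition is_run : Prop :=
  [/\
      forall t, 0 <= t -> forall e, (load t e <= (c e)%:E)%E,
      forall t, 0 <= t -> Fr t = [set e | load t e == (c e)%:E] &
      (* budgets: each former component S' now contained in S contributed
         eps per unit of demand-active time and -1 per unit of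
         budget-active time (budgets add up on merging) *)
      forall t, 0 <= t -> forall S, S \in comps (Fr t) ->
        bud t S = (\sum_(S' : {set V} | S' \subset S)
          (eps%:E * lebesgue_measure [set s : R | (0 <= s < t)%R /\ dact s S']%classic
           - lebesgue_measure [set s : R | (0 <= s < t)%R /\ bact s S']%classic))%E].

Definition yfin (S : {set V}) : \bar R :=
  lebesgue_measure [set s : R | 0 <= s /\ S \in active s]%classic.
Definition sep_demand (U : {set V}) : bool :=
  [exists p in D, separates U [set p.1; p.2]].
Definition Usep : {set {set V}} := [set U | (0 < yfin U)%E && sep_demand U].
Definition excess (F : {set E}) : \bar R :=
  ((cost F)%:E - \sum_(U in Usep) yfin U)%E.

Definition covered (t : R) (v : V) : bool := [exists S in active t, v \in S].
Definition tau (v : V) : \bar R :=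
  ereal_sup [set t%:E | t in [set t : R | 0 <= t /\
                                 forall s, 0 <= s < t -> covered s v]%classic]%classic.
Definition act_conn (u v : V) : Prop :=
  exists t : R, 0 <= t /\ conn (Fr t) u v /\
                (t%:E <= tau u)%E /\ (t%:E <= tau v)%E.

Variable OPT : {set E}.
Definition trees : {set {set V}} := comps OPT.
Definition tree_sep (T U : {set V}) : bool :=
  [exists p in D, [&& p.1 \in T, p.2 \in T & separates U [set p.1; p.2]]].
Definition tree_rel : rel {set V} := fun T1 T2 =>
  [&& T1 \in trees, T2 \in trees &
      [exists U in Usep, tree_sep T1 U && tree_sep T2 U]].
(* result of merging: forests = classes of trees under the closure of tree_rel *)
Definition forest_of (T : {set V}) : {set {set V}} := [set T' | connect tree_rel T T'].
Definition forests : {set {set {set V}}} := [set forest_of T | T in trees].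
Definition fverts (G : {set {set V}}) : {set V} := \bigcup_(T in G) T.
Definition root_ok (r : {set {set V}} -> V) : Prop :=
  forall G, G \in forests -> r G \in fverts G /\
    forall v, v \in fverts G -> (tau v <= tau (r G))%E.
Definition canonical_coll (r : {set {set V}} -> V) : {set {set V}} :=
  (\bigcup_(G in forests)
     [set [set v in T | `[< act_conn v (r G) >]] | T : {set V} in G]) :\ finset.set0.

Definition bad (Sc : {set {set V}}) (t : R) (S : {set V}) : bool :=
  [exists U in active t, separates U S && [exists S' in Sc :\ S, separates U S']].
Definition Bval (Sc : {set {set V}}) : \bar R :=
  (\int[lebesgue_measure]_(t in `[0%R, +oo[%classic)
     (#|[set S in Sc | bad Sc t S]|%:R : R)%:E)%E.

End SteinerForest.

From Pilot Require Import Defs.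
From HB Require Import structures.
From mathcomp Require Import all_boot all_order all_algebra.
From mathcomp Require Import all_classical all_reals all_analysis.
From mathcomp Require Import zify.
Import Order.TTheory GRing.Theory Num.Theory.
Local Open Scope classical_set_scope.
Local Open Scope ring_scope.

(* Members of the canonical collection lie inside trees of
   OPT, and two members meeting the same tree component coincide.  Hence if U
   separates a member S, the OPT-path inside S leaves U through an edge of
   delta(U) n OPT that is reachable in OPT from S only, so U separates at most
   k_U := |delta(U) n OPT| members.  If U makes some S bad it separates at
   least two, so k_U >= 2 and U makes at most 2 (k_U - [U in U_sep]) sets bad;
   when U separates a demand pair, feasibility of OPT gives k_U >= 1, so this
   subtraction is exact.  Integrating over t bounds B(S) by
   2 sum_U (k_U - [U in U_sep]) y_U, and dual feasibility
   sum_{U : e in delta(U)} y_U <= c_e summed over e in OPT gives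
   sum_U k_U y_U <= c(OPT), i.e. the bound 2 (c(OPT) - sum_{U_sep} y_U). *)

Set Implicit Arguments. Unset Strict Implicit.

Section Connectivity.
Variables (V E : finType) (src tgt : E -> V).
Implicit Types (F : {set E}) (U : {set V}).

Definition cut F U : {set E} := [set e in F | in_delta src tgt U e].

Lemma in_cut F U e : (e \in cut F U) = (e \in F) && in_delta src tgt U e.
Proof. by rewrite inE. Qed.

Lemma adj_sym F : symmetric (adj src tgt F).
Proof. by move=> u v; apply/existsP/existsP => -[e He]; exists e; rewrite orbC. Qed.

Lemma conn_sym F : connect_sym (adj src tgt F).
Proof. exact/sym_connect_sym/adj_sym. Qed.

Lemma conn_cross_cut F U a b : conn src tgt F a b -> a \in U -> b \notin U ->
  exists2 e, e \in cut F U & conn src tgt F a (src e).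
Proof.
move/connectP => [p + ->]; elim: p a => [|y p IH] a /=; first by move=> _ ->.
case/andP => /existsP[e /andP[eF e_ay]] yp aU bU.
case yU: (y \in U).
  have [e' e'cut ye'] := IH y yp yU bU.
  exists e' => //; apply: connect_trans ye'.
  by apply: connect1; apply/existsP; exists e; rewrite eF.
exists e; last first.
  case/orP: e_ay => /andP[/eqP se /eqP te]; rewrite se; first exact: connect0.
  by apply: connect1; apply/existsP; exists e; rewrite eF se te !eqxx orbT.
by rewrite in_cut eF /in_delta; case/orP: e_ay => /andP[/eqP-> /eqP->]; rewrite aU yU.
Qed.

Lemma conn_cut_gt0 F U a b : conn src tgt F a b -> (a \in U) != (b \in U) ->
  (0 < #|cut F U|)%N.
Proof.
move=> ab; rewrite card_gt0; case aU: (a \in U) => bU.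
  by have [e ecut _] := conn_cross_cut ab aU bU; apply/set0Pn; exists e.
rewrite /conn conn_sym in ab.
by have [e ecut _] := conn_cross_cut ab (negbNE bU) (negbT aU); apply/set0Pn; exists e.
Qed.

Lemma separates2 U a b : separates U [set a; b] = ((a \in U) != (b \in U)).
Proof.
rewrite /separates finset.setI_eq0 finset.setD_eq0 finset.subUset !finset.sub1set.
rewrite -finset.setI_eq0 finset.setIUl finset.setU_eq0 !finset.setI_eq0 !disjoints1.
by case: (a \in U); case: (b \in U).
Qed.

Lemma feasible_cut_gt0 D F U : feasible src tgt D F -> sep_demand D U ->
  (0 < #|cut F U|)%N.
Proof.
move=> /forallP feasF /existsP[p /andP[pD]]; rewrite separates2.
exact/conn_cut_gt0/(implyP (feasF p)).
Qed.

End Connectivity.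

Section CanonicalCollection.
Variables (V E : finType) (src tgt : E -> V) (D : {set V * V}) (R : realType)
  (Fr : R -> {set E}) (bud : R -> {set V} -> \bar R) (OPT : {set E})
  (r : {set {set V}} -> V).
Implicit Types (S U : {set V}) (x y : V).

Local Notation Sc := (canonical_coll src tgt D Fr bud OPT r).
Local Notation tree_rel := (tree_rel src tgt D Fr bud OPT).
Local Notation trees := (trees src tgt OPT).
Local Notation opt_conn := (conn src tgt OPT).
Local Notation opt_comp := (Defs.comp src tgt OPT).
Local Notation forest_of := (forest_of src tgt D Fr bud OPT).
Local Notation act_conn := (act_conn src tgt D Fr bud).
Local Notation active := (active src tgt D Fr bud).

Lemma tree_rel_sym : symmetric tree_rel.
Proof.
move=> T1 T2; rewrite /Defs.tree_rel andbA [_ && (T2 \in _)]andbC -andbA.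
congr [&& _, _ & _].
by apply/existsP/existsP => -[U /and3P[HU h1 h2]]; exists U; rewrite HU h1 h2.
Qed.

Lemma forest_of_eq T T' : T' \in forest_of T -> forest_of T' = forest_of T.
Proof.
rewrite inE => TT'; apply/setP => T''; rewrite !inE.
by rewrite (same_connect (sym_connect_sym tree_rel_sym) TT').
Qed.

Lemma mem_canonical_coll S : S \in Sc -> exists v,
  S = [set w in opt_comp v | `[< act_conn w (r (forest_of (opt_comp v))) >]].
Proof.
rewrite in_setD1 => /andP[_ /bigcupP[G /imsetP[T0 T0tree ->] /imsetP[T T0T ->]]].
have closed_trees : fingraph.closed tree_rel trees by move=> T1 T2 /and3P[-> -> _].
move: (T0T); rewrite inE => /(closed_connect closed_trees); rewrite T0tree.
by move=> /esym /imsetP[v _ Tv]; exists v; rewrite -Tv (forest_of_eq T0T).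
Qed.

Lemma canonical_coll_conn S x y : S \in Sc -> x \in S -> y \in S -> opt_conn x y.
Proof.
move=> /mem_canonical_coll[v ->]; rewrite !inE => /andP[vx _] /andP[vy _].
by rewrite /conn conn_sym in vx; apply: connect_trans vx vy.
Qed.

Lemma canonical_coll_conn_eq S S' x x' : S \in Sc -> S' \in Sc ->
  x \in S -> x' \in S' -> opt_conn x x' -> S = S'.
Proof.
move=> /mem_canonical_coll[v ->] /mem_canonical_coll[v' ->].
rewrite !inE => /andP[vx _] /andP[v'x' _] xx'.
suff -> : opt_comp v = opt_comp v' by [].
have vv' : opt_conn v v'.
  by apply: connect_trans vx (connect_trans xx' _); rewrite /conn conn_sym.
by apply/setP => w; rewrite !inE /conn (same_connect (conn_sym _ _ _) vv').
Qed.

Definition separated U := [set S in Sc | separates U S].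
Definition bad_via U := [set S in separated U | [exists S' in Sc :\ S, separates U S']].

Lemma separated_cut U S : S \in separated U ->
  exists2 e, e \in cut src tgt OPT U & [exists x in S, opt_conn x (src e)].
Proof.
rewrite inE => /andP[SSc /andP[/set0Pn[x /setIP[xS xU]] /set0Pn[y /setDP[yS yU]]]].
have [e ecut xe] := conn_cross_cut (canonical_coll_conn SSc xS yS) xU yU.
by exists e => //; apply/existsP; exists x; rewrite xS.
Qed.

Lemma card_separated U : (#|separated U| <= #|cut src tgt OPT U|)%N.
Proof.
pose P S e := (e \in cut src tgt OPT U) && [exists x in S, opt_conn x (src e)].
pose f S := [pick e | P S e].
have fP S : S \in separated U -> exists2 e, f S = Some e & P S e.
  move=> SU; rewrite /f; case: pickP => [e PSe | noP]; first by exists e.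
  by have [e ecut xe] := separated_cut SU; have := noP e; rewrite /P ecut xe.
have f_inj : {in separated U &, injective f}.
  move=> S S' SU S'U; have [e -> /andP[_ /existsP[x /andP[xS xe]]]] := fP S SU.
  have [e' -> /andP[_ /existsP[x' /andP[x'S' x'e']]]] := fP S' S'U => -[ee'].
  move: SU S'U => /setIdP[SSc _] /setIdP[S'Sc _].
  apply: (canonical_coll_conn_eq SSc S'Sc xS x'S'); apply: connect_trans xe _.
  by rewrite /conn conn_sym ee'.
rewrite -(card_in_imset f_inj) -(card_imset (cut src tgt OPT U) Some_inj).
apply: subset_leq_card.
apply/fintype.subsetP => _ /imsetP[S SU ->].
by have [e -> /andP[ecut _]] := fP S SU; exact: imset_f.
Qed.

Lemma card_bad_via U :
  (#|bad_via U| <= 2 * (#|cut src tgt OPT U| - sep_demand D U))%N.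
Proof.
have [->|[S0 S0bad]] := set_0Vmem (bad_via U); first by rewrite cards0.
have sub : bad_via U \subset separated U.
  by apply/fintype.subsetP => S /setIdP[].
have two : (1 < #|separated U|)%N.
  move: S0bad; rewrite inE => /andP[S0U /existsP[S1 /andP[/setD1P[S10 S1Sc] S1sep]]].
  by apply/card_gt1P; exists S1, S0; rewrite S0U S10 inE S1Sc S1sep.
have := card_separated U; have := subset_leq_card sub.
by case: (sep_demand D U); lia.
Qed.

Lemma card_bad_le_sum t :
  (#|[set S in Sc | bad src tgt D Fr bud Sc t S]|
     <= \sum_(U in active t) #|bad_via U|)%N.
Proof.
apply: (@leq_trans #|(\bigcup_(U in active t) bad_via U)%SET|).
  apply/subset_leq_card/fintype.subsetP => S /setIdP[SSc /existsP[U]].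
  case/and3P=> UA USsep USsep'; apply/bigcupP; exists U => //.
  by apply/setIdP; split => //; apply/setIdP.
elim/big_rec2: _ => [|U n A _ IH]; first by rewrite cards0.
by apply: leq_trans (leq_card_setU _ _) _; rewrite leq_add2l.
Qed.

End CanonicalCollection.

Section LebesgueOuterMeasure.
Variable R : realType.
Local Notation mu := (@lebesgue_measure R).

Lemma le_lebesgue_measure : {homo mu : A B / A `<=` B >-> (A <= B)%E}.
Proof. exact: (le_mu_ext (wlength idfun)). Qed.

Lemma lebesgue_measurable_hull (A : set R) :
  exists H : set R, [/\ measurable H, A `<=` H & mu H = mu A].
Proof.
have [G [oG AG mG]] := outer_measure_Gdelta A.
exists (\bigcap_i G i); split => //.
by apply: bigcapT_measurable => k; exact: measurable_realfun.open_measurable.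
Qed.

(* Continuity from below for arbitrary (possibly non-measurable) sets, via
   measurable hulls. *)
Lemma lebesgue_measure_truncation_cvg (A : set R) :
  (fun n : nat => mu (A `&` [set s | s < n%:R])) @ \oo --> mu A.
Proof.
set a := fun n : nat => _.
have a_nd : {homo a : n m / (n <= m)%N >-> (n <= m)%E}.
  move=> n m nm; apply: le_lebesgue_measure => s [As sn]; split => //.
  by apply: lt_le_trans sn _; rewrite ler_nat.
suff <- : ereal_sup (range a) = mu A by exact: ereal_nondecreasing_cvgn.
apply/eqP; rewrite eq_le; apply/andP; split.
  by apply: ge_ereal_sup => _ [n _ <-]; apply: le_lebesgue_measure => s [].
have /choice[H H_hull] n := lebesgue_measurable_hull (A `&` [set s | s < n%:R]).
pose K n := \bigcap_(m in [set m | (n <= m)%N]) H m.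
have K_meas n : measurable (K n).
  by apply: bigcap_measurable; [exists n => /= | move=> k _; case: (H_hull k)].
have K_nd : {homo K : n m / (n <= m)%N >-> (n <= m)%O}.
  by move=> n m nm; apply/subsetPset => s Ks k /= mk; apply: Ks; exact: leq_trans mk.
have AK : A `<=` \bigcup_n K n.
  move=> s As; exists (Num.bound `|s|) => // k /= hk.
  case: (H_hull k) => _ + _; apply; split => //.
  apply: le_lt_trans (ler_norm s) _; apply: lt_le_trans (archi_boundP (normr_ge0 s)) _.
  by rewrite ler_nat.
have K_cvg := nondecreasing_cvg_mu (mu := mu) K_meas
  (bigcup_measurable (fun k _ => K_meas k)) K_nd.
apply: le_trans (le_lebesgue_measure AK) _; apply: (cvge_le _ K_cvg).
apply: nearW => n /=; apply: le_trans (ereal_sup_ubound _); last by exists n.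
case: (H_hull n) => H_meas _; rewrite /a => <-.
apply: le_measure; rewrite ?inE //; first exact: K_meas.
by move=> s Ks; apply: (Ks n) => /=.
Qed.

Lemma ge0_le_integral_nonmeasurable (D : set R) (f g : R -> \bar R) :
  (forall x, D x -> (0 <= f x)%E) -> (forall x, D x -> (f x <= g x)%E) ->
  (\int[mu]_(x in D) f x <= \int[mu]_(x in D) g x)%E.
Proof.
move=> f0 fg.
have g0 x : D x -> (0 <= g x)%E by move=> Dx; apply: le_trans (f0 x Dx) (fg x Dx).
rewrite !ge0_integralE //; apply: ereal_sup_le => _ [h hf <-]; exists h => //= x.
exact: le_trans (hf x) (lee_restrict fg x).
Qed.

Lemma integral_sum_indic (D : set R) (I : finType) (w : I -> R) (H : I -> set R) :
  measurable D -> (forall i, 0 <= w i) -> (forall i, measurable (H i)) ->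
  (\int[mu]_(x in D) (\sum_(i : I) (w i)%:E * (\1_(H i) x)%:E)
   = \sum_(i : I) (w i)%:E * mu (H i `&` D))%E.
Proof.
move=> mD w0 mH.
have indic_meas i : measurable_fun D (\1_(H i) : R -> R).
  exact: measurable_realfun.measurable_indic (mH i).
rewrite ge0_integral_sum //; last first.
- by move=> i x _; rewrite mule_ge0 // lee_fin.
- move=> i; apply/measurable_realfun.measurable_EFinP.
  exact: measurable_realfun.measurable_funM (measurable_cst _) (indic_meas i).
apply: eq_bigr => i _; rewrite ge0_integralZl_EFin ?integral_indic //.
- exact: mH.
- by apply/measurable_realfun.measurable_EFinP; exact: indic_meas.
Qed.

End LebesgueOuterMeasure.

Lemma sume_const (R : realDomainType) (I : finType) (A : {pred I}) (x : \bar R) :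
  (\sum_(i in A) x = (#|A|%:R)%:E * x)%E.
Proof.
by rewrite big_const mule_natl; elim: #|A| => [|n IH]; rewrite ?mule0n // iterS IH muleS.
Qed.

Section Charging.
Variables (R : realType) (V E : finType) (src tgt : E -> V) (c : E -> R)
  (D : {set V * V}) (OPT : {set E}) (Fr : R -> {set E})
  (bud : R -> {set V} -> \bar R) (r : {set {set V}} -> V).
Hypothesis OPT_feasible : feasible src tgt D OPT.
Hypothesis load_le_cost :
  forall t, 0 <= t -> forall e, (load src tgt D Fr bud t e <= (c e)%:E)%E.

Local Notation mu := (@lebesgue_measure R).
Local Notation active := (active src tgt D Fr bud).
Local Notation ydual := (ydual src tgt D Fr bud).
Local Notation y := (yfin src tgt D Fr bud).
Local Notation k U := #|cut src tgt OPT U|.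
Local Notation active_time U := [set s : R | 0 <= s /\ U \in active s].

Definition weight (U : {set V}) : nat := 2 * (k U - sep_demand D U).

Lemma ydual_truncation (n : nat) U :
  ydual n%:R U = mu (active_time U `&` [set s | s < n%:R]).
Proof.
congr mu; apply/seteqP; split => s /=; first by case=> /andP[].
by case=> -[s0 sA] sn; split => //; apply/andP.
Qed.

Lemma yfin_cut_le_cost e : (\sum_(U | in_delta src tgt U e) y U <= (c e)%:E)%E.
Proof.
have cvg_sum : (fun n : nat => \sum_(U | in_delta src tgt U e) ydual n%:R U)
    @ \oo --> \sum_(U | in_delta src tgt U e) y U.
  apply: cvg_nnesum => U _; first by apply: nearW => n; exact: measure_ge0.
  under eq_fun do rewrite ydual_truncation.
  exact: lebesgue_measure_truncation_cvg.
by apply: (cvge_le _ cvg_sum); apply: nearW => n; exact: load_le_cost.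
Qed.

Lemma sum_cut_yfin_le_cost : (\sum_U (k U)%:R%:E * y U <= (cost c OPT)%:E)%E.
Proof.
under eq_bigr => U _ do rewrite -sume_const big_mkcond /=.
rewrite exchange_big /= /cost -sumEFin [leRHS]big_mkcond /=.
apply: lee_sum => e _; case: (boolP (e \in OPT)) => eOPT; last first.
  by rewrite big1 // => U _; rewrite in_cut (negbTE eOPT).
rewrite -big_mkcond /=; under eq_bigl => U do rewrite in_cut eOPT.
exact: yfin_cut_le_cost.
Qed.

Lemma sum_cut_yfin_split :
  (\sum_U ((k U - sep_demand D U)%:R)%:E * y U + \sum_(U in Usep src tgt D Fr bud) y U
     <= \sum_U (k U)%:R%:E * y U)%E.
Proof.
rewrite [X in (_ + X)%E]big_mkcond -big_split /=; apply: lee_sum => U _.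
rewrite inE; case: ifP => [/andP[_ Usep]|_].
  have k_gt0 := feasible_cut_gt0 OPT_feasible Usep.
  rewrite Usep -[X in (_ + X)%E]mul1e -ge0_muleDl ?lee_fin // -EFinD.
  by rewrite natr1 subn1 prednK.
rewrite adde0; apply: lee_wpmul2r; first exact: measure_ge0.
by rewrite lee_fin ler_nat leq_subr.
Qed.

Lemma sum_weight_yfin_le_excess :
  (\sum_U (weight U)%:R%:E * y U <= 2%:E * excess src tgt D c Fr bud OPT)%E.
Proof.
pose X := (\sum_U ((k U - sep_demand D U)%:R)%:E * y U)%E.
pose Y := (\sum_(U in Usep src tgt D Fr bud) y U)%E.
have X_ge0 : (0 <= X)%E by apply: sume_ge0 => U _; rewrite mule_ge0 ?lee_fin.
have Y_ge0 : (0 <= Y)%E by apply: sume_ge0 => U _; exact: measure_ge0.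
have XY_le_cost : (X + Y <= (cost c OPT)%:E)%E.
  exact: le_trans sum_cut_yfin_split sum_cut_yfin_le_cost.
have Y_fin : Y \is a fin_num.
  rewrite ge0_fin_numE //; apply: le_lt_trans (ltry (cost c OPT)).
  by apply: le_trans XY_le_cost; exact: leeDr.
have -> : (\sum_U (weight U)%:R%:E * y U = 2%:E * X)%E.
  rewrite ge0_sume_distrr; last by move=> U _; rewrite mule_ge0 ?lee_fin.
  by apply: eq_bigr => U _; rewrite /weight natrM EFinM muleA.
by apply: lee_wpmul2l; rewrite ?lee_fin // /excess leeBrDr.
Qed.

Local Notation Sc := (canonical_coll src tgt D Fr bud OPT r).

Lemma card_bad_le_weight t :
  (#|[set S in Sc | bad src tgt D Fr bud Sc t S]|
     <= \sum_(U in active t) weight U)%N.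
Proof.
apply: leq_trans (card_bad_le_sum src tgt D Fr bud OPT r t) _.
by apply: leq_sum => U _; exact: card_bad_via.
Qed.

(* The integrand of [Bval] need not be measurable; it is dominated by a
   nonnegative simple function built from measurable hulls of the sets of
   times at which each [U] is active. *)
Lemma Bval_le_sum_weight_yfin :
  (Bval src tgt D Fr bud Sc <= \sum_U (weight U)%:R%:E * y U)%E.
Proof.
have [H H_hull] := choice (fun U => lebesgue_measurable_hull (active_time U)).
have H_meas U : measurable (H U) by case: (H_hull U).
apply: (@le_trans _ _ (\int[mu]_(t in `[0%R, +oo[)
    (\sum_U ((weight U)%:R)%:E * (\1_(H U) t)%:E))%E).
  apply: ge0_le_integral_nonmeasurable => t; first by rewrite lee_fin.
  rewrite /= in_itv /= andbT => t_ge0.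
  under eq_bigr => U _ do rewrite -EFinM.
  rewrite sumEFin lee_fin.
  apply: le_trans (_ : _ <= \sum_(U in active t) (weight U)%:R) _.
    by rewrite -natr_sum ler_nat card_bad_le_weight.
  rewrite [leRHS](bigID (mem (active t))) /= -[leLHS]addr0.
  apply: lerD; last by apply: sumr_ge0 => U _; rewrite mulr_ge0 // indicE ler0n.
  apply: ler_sum => U UA; case: (H_hull U) => _ sub _.
  by rewrite indicE mem_set ?mulr1 //; apply: sub.
rewrite integral_sum_indic //; apply: lee_sum => U _.
apply: lee_wpmul2l; first by rewrite lee_fin.
rewrite /yfin; case: (H_hull U) => _ _ <-; apply: le_lebesgue_measure; exact: subIsetl.
Qed.

End Charging.

Unset Implicit Arguments. Set Strict Implicit.

Theorem lemma6p8 (R : realType) (V E : finType) (src tgt : E -> V)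
  (c : E -> R) (D : {set V * V}) (eps : R) (OPT : {set E})
  (Fr : R -> {set E}) (bud : R -> {set V} -> \bar R)
  (r : {set {set V}} -> V) :
  (forall e, src e != tgt e) ->
  (forall e, 0 <= c e) ->
  0 <= eps ->
  feasible src tgt D OPT ->
  (forall F : {set E}, feasible src tgt D F -> cost c OPT <= cost c F) ->
  (forall e, e \in OPT -> c e = 0 -> ~~ feasible src tgt D (OPT :\ e)) ->
  is_run src tgt D c eps Fr bud ->
  root_ok src tgt D Fr bud OPT r ->
  (Bval src tgt D Fr bud (canonical_coll src tgt D Fr bud OPT r)
     <= 2%:E * excess src tgt D c Fr bud OPT)%E.
Proof.
move=> _ _ _ OPT_feasible _ _ [load_le_cost _ _] _.
apply: le_trans (Bval_le_sum_weight_yfin src tgt D OPT Fr bud r) _.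
exact: sum_weight_yfin_le_excess OPT_feasible load_le_cost.
Qed.
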